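(* Let $v$ be an aperiodic infinite word over $\{0,1\}$ such that $\Phi_{\mathbb{R}}(v)$ exists. Then for all but finitely many $\ell\ge1$, if $u$ denotes the prefix of $v$ of length $\ell$, the series $\Phi_{\mathbb{R}}(u^\infty)$ of the purely periodic word $u^\infty=uuu\cdots$ converges and $$\Phi_{\mathbb{R}}(u^\infty)=C_{\mathbb{R}}(u).$$
   Context: For an infinite $0$-$1$ word $w$ with $1$'s at positions $d_0<d_1<\cdots$, $\Phi_{\mathbb{R}}(w)=-\sum_{i\ge0}2^{d_i}/3^{i+1}$, said to exist if the series converges in $\mathbb{R}$. For a finite word $u$ of length $\ell\ge1$ and height $h$ with $1$'s at positions $d_0<\dots<d_{h-1}$, $\varphi(u)=\sum_{i=0}^{h-1}3^{h-1-i}2^{d_i}$ and $C_{\mathbb{R}}(u)=\varphi(u)/(2^\ell-3^h)$. *)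

From Stdlib Require Import Reals Lra Lia Arith List ClassicalEpsilon.
From Coquelicot Require Import Coquelicot.
Open Scope R_scope.

(* Infinite 0-1 words: true = 1, false = 0. *)
Definition word := nat -> bool.

Fixpoint cnt (w : word) (n : nat) : nat :=
  match n with
  | O => O
  | S m => (cnt w m + (if w m then 1 else 0))%nat
  end.

(* d is the position of the i-th 1 (0-indexed), i.e. d = d_i *)
Definition is_one_pos (w : word) (i d : nat) : Prop :=
  w d = true /\ cnt w d = i.

Definition one_pos (w : word) (i : nat) : option nat :=
  match excluded_middle_informative (exists d, is_one_pos w i d) with
  | left H => Some (proj1_sig (constructive_indefinite_description _ H))
  | right _ => None
  end.

(* i-th term 2^{d_i}/3^{i+1} of the series (0 when d_i does not exist) *)
Definition phi_term (w : word) (i : nat) : R :=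
  match one_pos w i with
  | Some d => 2 ^ d / 3 ^ (i + 1)
  | None => 0
  end.

Definition PhiR_exists (w : word) : Prop := ex_series (phi_term w).
Definition PhiR (w : word) : R := - Series (phi_term w).

Definition aperiodic (w : word) : Prop :=
  ~ exists p N : nat, (0 < p)%nat /\ forall n, (N <= n)%nat -> w (n + p)%nat = w n.

Definition fword := list bool.
Definition prefix (v : word) (l : nat) : fword := map v (seq 0 l).
(* u^infty = u u u ... (for u nonempty) *)
Definition pow_inf (u : fword) : word := fun n => nth (n mod length u) u false.
Definition fget (u : fword) (n : nat) : bool := nth n u false.
Definition height (u : fword) : nat := length (filter (fun b : bool => b) u).
(* varphi(u) = sum_{i<h} 3^{h-1-i} 2^{d_i}, written as a sum over the
   positions n < length u carrying a 1 (for such n, i = cnt n) *)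
Definition varphi (u : fword) : R :=
  fold_right Rplus 0
    (map (fun n => if fget u n
                   then 3 ^ (height u - 1 - cnt (fget u) n) * 2 ^ n
                   else 0)
         (seq 0 (length u))).
Definition CR (u : fword) : R := varphi u / (2 ^ length u - 3 ^ height u).

From Stdlib Require Import Reals Lra Lia Arith List ClassicalEpsilon Classical.
From Coquelicot Require Import Coquelicot.
Open Scope R_scope.

(* Proof idea.  Write d_i for the position of the i-th 1 of a word.

   1. If w is periodic with period p and has h ones in [0,p), then
      d_{i+h} = d_i + p, so the terms of Phi_R(w) satisfy
      t_{i+h} = (2^p/3^h) t_i.  When 2^p < 3^h such a series is a sum of
      geometric progressions: it converges to (t_0+...+t_{h-1})/(1-2^p/3^h),
      which for w = u^infty is exactly C_R(u).  Hence Phi_R(u^infty) = C_R(u)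
      as soon as 2^|u| < 3^|u|_1.
   2. If Phi_R(v) converges, its terms 2^{d_i}/3^{i+1} tend to 0, so
      2^{d_i} < 3^i for all i >= N.  An aperiodic word has infinitely many
      ones; for a prefix u of length l > d_N with h ones we have h > N and
      d_h >= l, hence 2^l <= 2^{d_h} < 3^h, and step 1 applies. *)

Lemma cnt_S (w : word) (n : nat) :
  cnt w (S n) = (cnt w n + (if w n then 1 else 0))%nat.
Proof. reflexivity. Qed.

Lemma cnt_mono (w : word) (m n : nat) : (m <= n)%nat -> (cnt w m <= cnt w n)%nat.
Proof. induction 1; auto. rewrite cnt_S; lia. Qed.

Lemma cnt_ext (w w' : word) (n : nat) :
  (forall m, (m < n)%nat -> w m = w' m) -> cnt w n = cnt w' n.
Proof.
  induction n; intros H; simpl; auto.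
  rewrite IHn by (intros; apply H; lia). rewrite H by lia. reflexivity.
Qed.

Lemma cnt_periodic (w : word) (p n : nat) :
  (forall m, w (m + p)%nat = w m) -> cnt w (n + p) = (cnt w n + cnt w p)%nat.
Proof. intros H. induction n; simpl; auto. rewrite IHn, H. lia. Qed.

Lemma one_pos_lt_cnt (w : word) (i d n : nat) :
  is_one_pos w i d -> (d < n)%nat -> (i < cnt w n)%nat.
Proof.
  intros [Hd Hc] Hlt. pose proof (cnt_mono w (S d) n Hlt) as Hm.
  rewrite cnt_S, Hd in Hm. lia.
Qed.

Lemma is_one_pos_unique (w : word) (i d d' : nat) :
  is_one_pos w i d -> is_one_pos w i d' -> d = d'.
Proof.
  intros H H'.
  destruct (Nat.lt_total d d') as [Hl|[He|Hl]]; auto.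
  - pose proof (one_pos_lt_cnt _ _ _ _ H Hl). destruct H'; lia.
  - pose proof (one_pos_lt_cnt _ _ _ _ H' Hl). destruct H; lia.
Qed.

Lemma one_pos_Some (w : word) (i d : nat) : is_one_pos w i d -> one_pos w i = Some d.
Proof.
  intros H. unfold one_pos.
  destruct excluded_middle_informative as [e|n].
  - f_equal. destruct (constructive_indefinite_description _ e) as [x Hx]. simpl.
    eapply is_one_pos_unique; eauto.
  - exfalso; apply n; eauto.
Qed.

Lemma phi_term_one (w : word) (i d : nat) :
  is_one_pos w i d -> phi_term w i = 2 ^ d / 3 ^ (i + 1).
Proof. intros H. unfold phi_term. now rewrite (one_pos_Some _ _ _ H). Qed.

Lemma phi_term_none (w : word) (i : nat) :
  (forall d, ~ is_one_pos w i d) -> phi_term w i = 0.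
Proof.
  intros H. unfold phi_term. destruct (one_pos w i) eqn:E; auto.
  exfalso. apply (H n). unfold one_pos in E.
  destruct excluded_middle_informative as [e|]; [|discriminate].
  destruct (constructive_indefinite_description _ e) as [x Hx]. simpl in E. congruence.
Qed.

Lemma phi_term_ge0 (w : word) (i : nat) : 0 <= phi_term w i.
Proof.
  unfold phi_term. destruct (one_pos w i); [|lra].
  apply Rle_mult_inv_pos; [apply pow_le; lra | apply pow_lt; lra].
Qed.

Fixpoint psum (a : nat -> R) (n : nat) : R :=
  match n with O => 0 | S m => psum a m + a m end.

Lemma psum_sum_f (a : nat -> R) (n : nat) : psum a (S n) = sum_f_R0 a n.
Proof. induction n; simpl in *; [lra|]. now rewrite <- IHn. Qed.

Lemma psum_ext (a b : nat -> R) (n : nat) :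
  (forall m, (m < n)%nat -> a m = b m) -> psum a n = psum b n.
Proof. induction n; intros H; simpl; auto. rewrite IHn, H; auto; intros; apply H; lia. Qed.

Lemma psum_mono (a : nat -> R) (m n : nat) :
  (forall i, 0 <= a i) -> (m <= n)%nat -> psum a m <= psum a n.
Proof. intros Ha. induction 1; [lra|]. simpl. specialize (Ha m0). lra. Qed.

Lemma psum_scal (c : R) (a : nat -> R) (n : nat) :
  psum (fun i => c * a i) n = c * psum a n.
Proof. induction n; simpl; [ring|]. rewrite IHn; ring. Qed.

Lemma fold_map_seq (g : nat -> R) (n : nat) :
  fold_right Rplus 0 (map g (seq 0 n)) = psum g n.
Proof.
  induction n; [reflexivity|].
  rewrite seq_S, map_app, fold_right_app. simpl.
  rewrite <- IHn. clear IHn. generalize (g n).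
  induction (map g (seq 0 n)); simpl; intros; [ring|]. rewrite IHl. ring.
Qed.

(* The terms of Phi_R indexed by positions rather than by rank:
   position m contributes 2^m/3^{i+1} when it carries the i-th one. *)
Definition pos_term (w : word) (m : nat) : R :=
  if w m then 2 ^ m / 3 ^ (cnt w m + 1) else 0.

Lemma psum_pos_term (w : word) (n : nat) :
  psum (pos_term w) n = psum (phi_term w) (cnt w n).
Proof.
  induction n; simpl; auto.
  unfold pos_term at 2. destruct (w n) eqn:E.
  - rewrite Nat.add_1_r. simpl psum at 2. rewrite IHn. f_equal.
    symmetry. rewrite <- Nat.add_1_r. apply phi_term_one. split; auto.
  - rewrite Nat.add_0_r, IHn. ring.
Qed.

Section GeometricBlocks.
Variables (a : nat -> R) (h : nat) (r : R).
Hypothesis h_pos : (1 <= h)%nat.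
Hypothesis r_range : 0 <= r < 1.
Hypothesis a_ge0 : forall i, 0 <= a i.
Hypothesis a_shift : forall i, a (i + h)%nat = r * a i.

Lemma psum_shift_block (n : nat) : psum a (n + h) = psum a h + r * psum a n.
Proof. induction n; simpl; [ring|]. rewrite IHn, a_shift. ring. Qed.

Lemma psum_block_bound (n : nat) : psum a n <= psum a h / (1 - r).
Proof.
  set (A := psum a h).
  assert (HA : 0 <= A) by (apply (psum_mono a 0 h a_ge0); lia).
  assert (HAr : A <= A / (1 - r)).
  { apply (Rmult_le_reg_r (1 - r)); [lra|].
    unfold Rdiv. rewrite Rmult_assoc, Rinv_l by lra. nra. }
  induction n as [n IH] using lt_wf_ind.
  destruct (le_lt_dec h n) as [Hle|Hlt].
  - replace n with ((n - h) + h)%nat by lia. rewrite psum_shift_block.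
    specialize (IH (n - h)%nat ltac:(lia)).
    apply Rle_trans with (A + r * (A / (1 - r))); [unfold A in *; nra|].
    right. field. lra.
  - apply Rle_trans with A; auto. apply psum_mono; auto; lia.
Qed.

Lemma geometric_blocks_series : ex_series a /\ Series a = psum a h / (1 - r).
Proof.
  assert (Hex : ex_series a).
  { assert (Hf : ex_finite_lim_seq (sum_n a)).
    { apply ex_finite_lim_seq_incr with (psum a h / (1 - r)).
      - intro n. rewrite sum_Sn. specialize (a_ge0 (S n)). unfold plus; simpl. lra.
      - intro n. rewrite sum_n_Reals, <- psum_sum_f. apply psum_block_bound. }
    destruct Hf as [l Hl]. now exists l. }
  split; auto.
  (* Splitting off the first block gives S = A + r S. *)
  assert (E : Series a = psum a h + r * Series a).
  { rewrite (Series_incr_n a h) at 1 by (auto; lia).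
    rewrite <- (Series_scal_l r a). f_equal.
    - destruct h; [lia|]. simpl Init.Nat.pred. now rewrite psum_sum_f.
    - apply Series_ext. intro n. rewrite Nat.add_comm. apply a_shift. }
  apply (Rmult_eq_reg_r (1 - r)); [|lra].
  unfold Rdiv. rewrite Rmult_assoc, Rinv_l by lra. lra.
Qed.

End GeometricBlocks.

(* In a p-periodic word with h ones per period, d_{i+h} = d_i + p, hence
   t_{i+h} = (2^p/3^h) t_i. *)
Lemma phi_term_periodic (w : word) (p : nat) :
  (forall m, w (m + p)%nat = w m) ->
  forall i, phi_term w (i + cnt w p) = 2 ^ p / 3 ^ cnt w p * phi_term w i.
Proof.
  intros Hper i. set (h := cnt w p).
  assert (Hcp : forall n, cnt w (n + p) = (cnt w n + h)%nat)
    by (intros; now apply cnt_periodic).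
  destruct (classic (exists d, is_one_pos w i d)) as [[d Hd]|Hn].
  - rewrite (phi_term_one _ _ _ Hd), (phi_term_one w (i + h) (d + p)).
    + rewrite !pow_add. field. split; apply pow_nonzero; lra.
    + destruct Hd as [Hd1 Hd2]. split; [now rewrite Hper | rewrite Hcp; lia].
  - rewrite (phi_term_none w i) by (intros d Hd; apply Hn; eauto).
    rewrite phi_term_none; [ring|].
    intros d Hd. destruct (le_lt_dec p d) as [Hle|Hlt].
    + apply Hn. exists (d - p)%nat. destruct Hd as [Hd1 Hd2].
      replace d with ((d - p) + p)%nat in Hd1, Hd2 by lia.
      rewrite Hper in Hd1. rewrite Hcp in Hd2. split; auto; lia.
    + pose proof (one_pos_lt_cnt _ _ _ _ Hd Hlt). unfold h in *; lia.
Qed.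

Lemma pow_inf_periodic (u : fword) (n : nat) :
  (1 <= length u)%nat -> pow_inf u (n + length u)%nat = pow_inf u n.
Proof.
  intros H. unfold pow_inf.
  replace (n + length u)%nat with (n + 1 * length u)%nat by lia.
  now rewrite Nat.Div0.mod_add.
Qed.

Lemma pow_inf_lt (u : fword) (m : nat) : (m < length u)%nat -> pow_inf u m = fget u m.
Proof. intros H. unfold pow_inf, fget. now rewrite Nat.mod_small. Qed.

Lemma height_cnt (u : fword) : height u = cnt (fget u) (length u).
Proof.
  induction u as [|b u IH] using rev_ind; auto.
  unfold height in *. rewrite filter_app, !length_app. simpl length.
  rewrite Nat.add_1_r, cnt_S.
  rewrite (cnt_ext (fget (u ++ b :: nil)) (fget u))
    by (intros m Hm; unfold fget; now rewrite app_nth1).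
  rewrite <- IH. unfold fget. rewrite nth_middle.
  destruct b; simpl; rewrite ?length_app; simpl; lia.
Qed.

Section PeriodicWord.
Variable u : fword.
Hypothesis u_nonempty : (1 <= length u)%nat.

Let w := pow_inf u.
Let l := length u.
Let h := height u.

Lemma cnt_pow_inf (m : nat) : (m <= l)%nat -> cnt w m = cnt (fget u) m.
Proof. intros Hm. apply cnt_ext. intros; apply pow_inf_lt. unfold l in *; lia. Qed.

Lemma cnt_pow_inf_period : cnt w l = h.
Proof. rewrite cnt_pow_inf by lia. unfold h. now rewrite height_cnt. Qed.

Lemma varphi_psum : varphi u = 3 ^ h * psum (phi_term w) h.
Proof.
  pose proof cnt_pow_inf_period as Hh.
  rewrite <- Hh at 2. rewrite <- psum_pos_term.
  unfold varphi. rewrite fold_map_seq, <- psum_scal.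
  apply psum_ext. intros m Hm. unfold pos_term.
  rewrite <- pow_inf_lt, <- cnt_pow_inf by (unfold l; lia).
  fold w. destruct (w m) eqn:E; [|ring].
  assert (Hc : (cnt w m + 1 <= h)%nat).
  { rewrite <- Hh, Nat.add_1_r. apply (one_pos_lt_cnt w _ m); [split; auto | exact Hm]. }
  replace (3 ^ h) with (3 ^ (h - 1 - cnt w m) * 3 ^ (cnt w m + 1))
    by (rewrite <- pow_add; f_equal; lia).
  fold h. field. apply pow_nonzero; lra.
Qed.

Lemma periodic_value :
  2 ^ l < 3 ^ h -> PhiR_exists w /\ PhiR w = CR u.
Proof.
  intros Hlt.
  pose proof cnt_pow_inf_period as Hh.
  assert (Hpow3 : 0 < 3 ^ h) by (apply pow_lt; lra).
  assert (Hpow2 : 0 < 2 ^ l) by (apply pow_lt; lra).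
  assert (H1h : (1 <= h)%nat).
  { destruct h as [|h']; [|lia]. exfalso. simpl in Hlt.
    assert (2 ^ 1 <= 2 ^ l) by (apply Rle_pow; [lra | unfold l; lia]). simpl in *; lra. }
  set (r := 2 ^ l / 3 ^ h).
  assert (Hr : 0 <= r < 1).
  { unfold r. split; [apply Rle_mult_inv_pos; lra|].
    apply (Rmult_lt_reg_r (3 ^ h)); auto. unfold Rdiv. rewrite Rmult_assoc, Rinv_l; lra. }
  assert (Hs : forall i, phi_term w (i + h) = r * phi_term w i).
  { intro i. unfold r. rewrite <- Hh. apply phi_term_periodic.
    intro m. now apply pow_inf_periodic. }
  destruct (geometric_blocks_series (phi_term w) h r H1h Hr (phi_term_ge0 w) Hs)
    as [Hex Hser].
  split; [exact Hex|].
  unfold PhiR, CR. rewrite Hser. fold l h. rewrite varphi_psum. unfold r.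
  field. repeat split; try lra; apply pow_nonzero; lra.
Qed.

End PeriodicWord.

Lemma aperiodic_ones (v : word) : aperiodic v -> forall N, exists m, (N <= m)%nat /\ v m = true.
Proof.
  intros Ha N. apply NNPP. intros Hn. apply Ha. exists 1%nat, N. split; [lia|].
  intros n Hn'. destruct (v n) eqn:E.
  - exfalso; apply Hn; eauto.
  - destruct (v (n + 1)%nat) eqn:E'; auto.
    exfalso; apply Hn. exists (n + 1)%nat; split; auto; lia.
Qed.

(* An aperiodic word has infinitely many ones, so every d_i exists. *)
Lemma aperiodic_one_pos (v : word) : aperiodic v -> forall i, exists d, is_one_pos v i d.
Proof.
  intros Ha i.
  assert (Hbig : exists n, (i < cnt v n)%nat).
  { induction i as [|i [n Hn]].
    - destruct (aperiodic_ones v Ha 0) as [m [_ Hm]].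
      exists (S m). rewrite cnt_S, Hm. lia.
    - destruct (aperiodic_ones v Ha n) as [m [Hm1 Hm2]].
      exists (S m). rewrite cnt_S, Hm2. pose proof (cnt_mono v n m Hm1). lia. }
  destruct Hbig as [n Hn]. induction n as [|n IH]; simpl in Hn; [lia|].
  destruct (le_lt_dec (S i) (cnt v n)) as [Hle|Hlt]; [now apply IH|].
  exists n. destruct (v n) eqn:E; [split; auto; lia | lia].
Qed.

Lemma prefix_length (v : word) (l : nat) : length (prefix v l) = l.
Proof. unfold prefix. now rewrite length_map, length_seq. Qed.

Lemma prefix_height (v : word) (l : nat) : height (prefix v l) = cnt v l.
Proof.
  rewrite height_cnt, prefix_length. apply cnt_ext. intros m Hm.
  unfold fget, prefix.
  rewrite nth_indep with (d' := v 0%nat) by (rewrite length_map, length_seq; lia).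
  rewrite map_nth, seq_nth; auto.
Qed.

(* Convergence of Phi_R(v) forces its terms below 1/3 from some rank on,
   i.e. 2^{d_i} < 3^i for all large i. *)
Lemma eventually_small_positions (v : word) :
  PhiR_exists v ->
  exists N, forall i d, (N <= i)%nat -> is_one_pos v i d -> 2 ^ d < 3 ^ i.
Proof.
  intros He.
  pose proof (ex_series_lim_0 _ He) as Hl. apply is_lim_seq_spec in Hl.
  destruct (Hl (mkposreal (1/3) ltac:(lra))) as [N HN]. simpl in HN.
  exists N. intros i d Hi Hd. specialize (HN i Hi).
  rewrite (phi_term_one _ _ _ Hd), Rminus_0_r in HN.
  assert (Hpow3 : 0 < 3 ^ i) by (apply pow_lt; lra).
  assert (Hpow2 : 0 < 2 ^ d) by (apply pow_lt; lra).
  rewrite Rabs_pos_eq in HN by (apply Rle_mult_inv_pos; [lra | apply pow_lt; lra]).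
  rewrite pow_add in HN. simpl in HN.
  apply (Rmult_lt_reg_r (/ (3 ^ i * 3))); [apply Rinv_0_lt_compat; lra|].
  replace (3 ^ i * / (3 ^ i * 3)) with (1/3) by (field; lra).
  now rewrite Rmult_1_r in HN.
Qed.

Theorem lemma35 (v : word) :
  aperiodic v -> PhiR_exists v ->
  exists L : nat, forall l : nat, (1 <= l)%nat -> (L <= l)%nat ->
    PhiR_exists (pow_inf (prefix v l)) /\
    PhiR (pow_inf (prefix v l)) = CR (prefix v l).
Proof.
  intros Ha He.
  destruct (eventually_small_positions v He) as [N HN].
  destruct (aperiodic_one_pos v Ha N) as [dN HdN].
  exists (S dN). intros l H1 HL.
  apply periodic_value; rewrite ?prefix_length, ?prefix_height; auto.
  set (h := cnt v l).
  (* The prefix contains d_N, so it has more than N ones ... *)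
  assert (HhN : (N < h)%nat) by (apply (one_pos_lt_cnt v N dN); [exact HdN | lia]).
  (* ... and the next one, d_h, lies beyond the prefix. *)
  destruct (aperiodic_one_pos v Ha h) as [dh Hdh].
  assert (Hdl : (l <= dh)%nat).
  { destruct (le_lt_dec l dh) as [|Hlt]; auto.
    pose proof (one_pos_lt_cnt _ _ _ _ Hdh Hlt). unfold h in *; lia. }
  apply Rle_lt_trans with (2 ^ dh); [apply Rle_pow; lra || lia|].
  apply (HN h dh); [lia | exact Hdh].
Qed.
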